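(* Suppose $f$ is convex, Assumptions 1 and 2 hold, $H_k\succeq0$ for all $k$, and there is $\eta\in[0,1)$ such that every $d^k$ satisfies the $\eta$-inexactness condition for $Q_k=Q^{x^k}_{H_k}$. Then for Algorithm 1: (1) For every $k$ with $F(x^k)-F^*\ge (x^k-P_\Omega(x^k))^TH_k(x^k-P_\Omega(x^k))$, $$F(x^{k+1})-F^*\le\left(1-\frac{(1-\eta)\gamma\alpha_k}{2}\right)(F(x^k)-F^* ).$$ (2) Let $k_0$ be the smallest index $k$ with $F(x^k)-F^*<MR_0^2$. Then for all $k\ge k_0$, $$F(x^k)-F^*\le\frac{2MR_0^2}{\gamma(1-\eta)\sum_{t=k_0}^{k-1}\alpha_t+2}.$$ If there exists $\bar\alpha>0$ with $\alpha_k\ge\bar\alpha$ for all $k$, then $$k_0\le\max\left\{0,\ 1+\frac{2}{\gamma(1-\eta)\bar\alpha}\log\frac{F(x^0)-F^*}{MR_0^2}\right\}.$$ For Algorithm 2, if the initial matrices satisfy $m_0I\preceq H_k^0\preceq M_0I$ for all $k$ (with $M_0>0$, $m_0\le M_0$, and $m_0>0$ for Variant 1) and the final $H_k\succeq0$, the same conclusions hold with $\alpha_k\equiv1$, $\bar\alpha=1$, and $M$ replaced by $\tilde M_1(\eta)$ for Variant 1 and by $\tilde M_2(\eta)$ for Variant 2.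
   Context: Problem setting: $F(x)=f(x)+\psi(x)$ on $\mathbb{R}^n$, $F^*=\inf F$, $\Omega=\{x:F(x)=F^*\}$, $P_\Omega$ the Euclidean projection onto $\Omega$, $\|\cdot\|$ the Euclidean / spectral norm. Assumption 1: $f$ is differentiable with $L$-Lipschitz continuous gradient ($L>0$); $\psi:\mathbb{R}^n\to\mathbb{R}\cup\{+\infty\}$ is convex, proper and closed; $F$ is bounded below; $\Omega$ is nonempty. For $x\in\mathbb{R}^n$ and symmetric $H$, $Q^x_H(d)\coloneqq\nabla f(x)^Td+\frac12d^THd+\psi(x+d)-\psi(x)$, $Q^*=\inf_dQ^x_H(d)$; $d$ satisfies the $\eta$-inexactness condition if $Q^x_H(d)\le(1-\eta)Q^*$. Algorithm 1: given $\beta,\gamma\in(0,1)$, $x^0$, fixed $\eta\in[0,1)$; for $k=0,1,\dots$: choose symmetric $H_k$ with $Q_k\coloneqq Q^{x^k}_{H_k}$ strongly convex; compute $d^k$ satisfying the $\eta$-inexactness condition for $Q_k$; let $\Delta_k=\nabla f(x^k)^Td^k+\psi(x^k+d^k)-\psi(x^k)$; let $\alpha_k=\beta^i$ for the smallest nonnegative integer $i$ with $F(x^k+\alpha_kd^k)\le F(x^k)+\alpha_k\gamma\Delta_k$; set $x^{k+1}=x^k+\alpha_kd^k$. Algorithm 2: given $\beta\in(0,1)$, $\gamma\in(0,1]$, $x^0$, fixed $\eta\in[0,1)$; for each $k$: choose symmetric $H^0_k$ (in Variant 1, $H^0_k\succ0$); set $\alpha_k\leftarrow1$, $H_k\leftarrow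 H^0_k$, compute $d^k$ satisfying the $\eta$-inexactness condition for $Q^{x^k}_{H_k}$; while $F(x^k)-F(x^k+d^k)\ge-\gamma Q^{x^k}_{H_k}(d^k)\ge0$ fails: Variant 1 sets $\alpha_k\leftarrow\beta\alpha_k$, $H_k\leftarrow H^0_k/\alpha_k$; Variant 2 sets $H_k\leftarrow H^0_k+\alpha_k^{-1}I$, then $\alpha_k\leftarrow\beta\alpha_k$; then $d^k$ is recomputed satisfying the $\eta$-inexactness condition. Finally $x^{k+1}=x^k+d^k$; ''final $H_k$'' is the accepted matrix. Assumption 2: there exist finite $R_0,M>0$ with $\sup_{x:F(x)\le F(x^0)}\|x-P_\Omega(x)\|=R_0<\infty$ and $\|H_k\|\le M$ for all $k$. Constants: $\tilde M_2(\eta)\coloneqq M_0+\max\{1,\frac1\beta(\frac{L(1+\sqrt\eta)}{2-\gamma(1-\sqrt\eta)}-m_0)\}$, $\tilde M_1(\eta)\coloneqq M_0\max\{1,\frac{L(1+\sqrt\eta)}{\beta(2-\gamma(1-\sqrt\eta))m_0}\}$. *)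

From Stdlib Require Import Reals Lra.
From Stdlib Require Vectors.Fin.
Open Scope R_scope.

Definition vec (n : nat) := Fin.t n -> R.
Definition mat (n : nat) := Fin.t n -> Fin.t n -> R.

Fixpoint finsum (n : nat) : (Fin.t n -> R) -> R :=
  match n return (Fin.t n -> R) -> R with
  | O => fun _ => 0
  | S m => fun u => u Fin.F1 + finsum m (fun i => u (Fin.FS i))
  end.

Definition vadd {n} (u v : vec n) : vec n := fun i => u i + v i.
Definition vsub {n} (u v : vec n) : vec n := fun i => u i - v i.
Definition vscale {n} (a : R) (u : vec n) : vec n := fun i => a * u i.
Definition dot {n} (u v : vec n) : R := finsum n (fun i => u i * v i).
Definition vnorm {n} (u : vec n) : R := sqrt (dot u u).

Definition mv {n} (H : mat n) (v : vec n) : vec n := fun i => finsum n (fun j => H i j * v j).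
Definition quad {n} (H : mat n) (v : vec n) : R := dot v (mv H v).
Definition madd {n} (A B : mat n) : mat n := fun i j => A i j + B i j.
Definition mscale {n} (a : R) (A : mat n) : mat n := fun i j => a * A i j.
Definition ident (n : nat) : mat n := fun i j => if Fin.eq_dec i j then 1 else 0.

Definition symmetric {n} (H : mat n) : Prop := forall i j, H i j = H j i.
Definition psd {n} (H : mat n) : Prop := forall v, 0 <= quad H v.
Definition pd {n} (H : mat n) : Prop := forall v, v <> (fun _ => 0) -> 0 < quad H v.
Definition loewner_between {n} (m M : R) (H : mat n) : Prop :=
  forall v, m * dot v v <= quad H v /\ quad H v <= M * dot v v.
Definition spec_norm_le {n} (H : mat n) (M : R) : Prop :=
  forall v, vnorm (mv H v) <= M * vnorm v.

Definition is_glb (S : R -> Prop) (m : R) : Prop :=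
  (forall y, S y -> m <= y) /\ (forall b, (forall y, S y -> b <= y) -> b <= m).

(* sum_{t=m}^{m+len-1} a t *)
Fixpoint rsum (a : nat -> R) (m len : nat) : R :=
  match len with O => 0 | S l => rsum a m l + a (m + l)%nat end.

Definition has_gradient {n} (f : vec n -> R) (g : vec n -> vec n) : Prop :=
  forall x eps, 0 < eps -> exists delta, 0 < delta /\
    forall h, vnorm h < delta ->
      Rabs (f (vadd x h) - f x - dot (g x) h) <= eps * vnorm h.

Definition vconv {n} (xs : nat -> vec n) (x : vec n) : Prop :=
  Un_cv (fun j => vnorm (vsub (xs j) x)) 0.

Definition convex_fun {n} (f : vec n -> R) : Prop :=
  forall x y t, 0 <= t <= 1 ->
    f (vadd (vscale t x) (vscale (1 - t) y)) <= t * f x + (1 - t) * f y.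

(* An extended-valued function psi : R^n -> R ∪ {+oo} is represented by its
   effective domain dom and its (finite) values psi on dom; psi = +oo off dom. *)
Definition convex_set {n} (C : vec n -> Prop) : Prop :=
  forall x y t, C x -> C y -> 0 <= t <= 1 -> C (vadd (vscale t x) (vscale (1 - t) y)).

Definition ext_convex {n} (dom : vec n -> Prop) (psi : vec n -> R) : Prop :=
  convex_set dom /\
  forall x y t, dom x -> dom y -> 0 <= t <= 1 ->
    psi (vadd (vscale t x) (vscale (1 - t) y)) <= t * psi x + (1 - t) * psi y.

Definition ext_proper {n} (dom : vec n -> Prop) : Prop := exists x, dom x.

(* closed: the epigraph {(x,t) : x ∈ dom, psi x <= t} is closed *)
Definition ext_closed {n} (dom : vec n -> Prop) (psi : vec n -> R) : Prop :=
  forall (xs : nat -> vec n) (ts : nat -> R) x t,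
    (forall j, dom (xs j) /\ psi (xs j) <= ts j) ->
    vconv xs x -> Un_cv ts t -> dom x /\ psi x <= t.

Definition Fv {n} (f psi : vec n -> R) (x : vec n) : R := f x + psi x.

Definition Omega {n} (dom : vec n -> Prop) (f psi : vec n -> R) (Fs : R) (x : vec n) : Prop :=
  dom x /\ Fv f psi x = Fs.

Definition is_projection {n} (C : vec n -> Prop) (P : vec n -> vec n) : Prop :=
  forall x, C (P x) /\ forall q, C q -> vnorm (vsub x (P x)) <= vnorm (vsub x q).

Definition assumption1 {n} (f : vec n -> R) (g : vec n -> vec n) (L : R)
    (dom : vec n -> Prop) (psi : vec n -> R) (Fs : R) : Prop :=
  0 < L /\ has_gradient f g /\
  (forall x y, vnorm (vsub (g x) (g y)) <= L * vnorm (vsub x y)) /\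
  ext_convex dom psi /\ ext_proper dom /\ ext_closed dom psi /\
  (exists b, forall x, dom x -> b <= Fv f psi x) /\
  is_glb (fun r => exists x, dom x /\ r = Fv f psi x) Fs /\
  (exists x, Omega dom f psi Fs x).

Definition assumption2 {n} (dom : vec n -> Prop) (f psi : vec n -> R) (P : vec n -> vec n)
    (x0 : vec n) (H : nat -> mat n) (R0 M : R) : Prop :=
  0 < R0 /\ 0 < M /\
  is_lub (fun r => exists y, dom y /\ Fv f psi y <= Fv f psi x0 /\ r = vnorm (vsub y (P y))) R0 /\
  (forall k, spec_norm_le (H k) M).

(* finite part of Q^x_H(d) = grad f(x)^T d + 1/2 d^T H d + psi(x+d) - psi(x);
   Q^x_H(d) = +oo iff x+d ∉ dom *)
Definition Qv {n} (g : vec n -> vec n) (psi : vec n -> R) (x : vec n) (H : mat n) (d : vec n) : R :=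
  dot (g x) d + / 2 * quad H d + psi (vadd x d) - psi x.

Definition Q_strongly_convex {n} (dom : vec n -> Prop) (g : vec n -> vec n) (psi : vec n -> R)
    (x : vec n) (H : mat n) : Prop :=
  exists mu, 0 < mu /\ forall d1 d2 t, dom (vadd x d1) -> dom (vadd x d2) -> 0 <= t <= 1 ->
    Qv g psi x H (vadd (vscale t d1) (vscale (1 - t) d2))
      <= t * Qv g psi x H d1 + (1 - t) * Qv g psi x H d2
         - mu / 2 * t * (1 - t) * (vnorm (vsub d1 d2)) ^ 2.

Definition inexact {n} (dom : vec n -> Prop) (g : vec n -> vec n) (psi : vec n -> R)
    (x : vec n) (H : mat n) (eta : R) (d : vec n) : Prop :=
  dom (vadd x d) /\
  exists Qs, is_glb (fun r => exists e, dom (vadd x e) /\ r = Qv g psi x H e) Qs /\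
    Qv g psi x H d <= (1 - eta) * Qs.

Definition armijo {n} (dom : vec n -> Prop) (f psi : vec n -> R) (g : vec n -> vec n)
    (beta gamma : R) (x d : vec n) (i : nat) : Prop :=
  let a := beta ^ i in
  let Delta := dot (g x) d + psi (vadd x d) - psi x in
  dom (vadd x (vscale a d)) /\
  Fv f psi (vadd x (vscale a d)) <= Fv f psi x + a * gamma * Delta.

Definition alg1_run {n} (dom : vec n -> Prop) (f psi : vec n -> R) (g : vec n -> vec n)
    (beta gamma eta : R) (x : nat -> vec n) (H : nat -> mat n) (d : nat -> vec n)
    (alpha : nat -> R) : Prop :=
  0 < beta < 1 /\ 0 < gamma < 1 /\ 0 <= eta < 1 /\ dom (x O) /\
  forall k,
    symmetric (H k) /\ Q_strongly_convex dom g psi (x k) (H k) /\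
    inexact dom g psi (x k) (H k) eta (d k) /\
    (exists i : nat, alpha k = beta ^ i /\ armijo dom f psi g beta gamma (x k) (d k) i /\
        forall j, (j < i)%nat -> ~ armijo dom f psi g beta gamma (x k) (d k) j) /\
    x (S k) = vadd (x k) (vscale (alpha k) (d k)).

(* matrix used at the i-th trial (after i failed acceptance tests) *)
Definition trialH_v1 {n} (beta : R) (H0 : mat n) (i : nat) : mat n :=
  mscale (/ beta ^ i) H0.                       (* H0 / alpha, alpha = beta^i *)
Definition trialH_v2 {n} (beta : R) (H0 : mat n) (i : nat) : mat n :=
  match i with
  | O => H0
  | S j => madd H0 (mscale (/ beta ^ j) (ident n))  (* H0 + alpha^{-1} I, alpha = beta^j *)
  end.

Definition accept {n} (f psi : vec n -> R) (g : vec n -> vec n) (gamma : R)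
    (x : vec n) (H : mat n) (d : vec n) : Prop :=
  Fv f psi x - Fv f psi (vadd x d) >= - gamma * Qv g psi x H d /\
  - gamma * Qv g psi x H d >= 0.

Definition alg2_run {n} (trial : R -> mat n -> nat -> mat n) (variant1 : bool)
    (dom : vec n -> Prop) (f psi : vec n -> R) (g : vec n -> vec n)
    (beta gamma eta : R) (x : nat -> vec n) (H0 H : nat -> mat n) (d : nat -> vec n) : Prop :=
  0 < beta < 1 /\ 0 < gamma <= 1 /\ 0 <= eta < 1 /\ dom (x O) /\
  forall k,
    symmetric (H0 k) /\ (variant1 = true -> pd (H0 k)) /\
    exists (ik : nat) (dt : nat -> vec n),
      (forall i, (i <= ik)%nat -> inexact dom g psi (x k) (trial beta (H0 k) i) eta (dt i)) /\
      (forall i, (i < ik)%nat -> ~ accept f psi g gamma (x k) (trial beta (H0 k) i) (dt i)) /\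
      accept f psi g gamma (x k) (trial beta (H0 k) ik) (dt ik) /\
      H k = trial beta (H0 k) ik /\ d k = dt ik /\
      x (S k) = vadd (x k) (d k).

Definition Mtilde1 (M0 m0 L beta gamma eta : R) : R :=
  M0 * Rmax 1 (L * (1 + sqrt eta) / (beta * (2 - gamma * (1 - sqrt eta)) * m0)).
Definition Mtilde2 (M0 m0 L beta gamma eta : R) : R :=
  M0 + Rmax 1 (/ beta * (L * (1 + sqrt eta) / (2 - gamma * (1 - sqrt eta)) - m0)).

Definition conclusions {n} (f psi : vec n -> R) (P : vec n -> vec n) (Fs R0 M gamma eta : R)
    (x : nat -> vec n) (H : nat -> mat n) (alpha : nat -> R) : Prop :=
  let F := Fv f psi in
  (forall k, quad (H k) (vsub (x k) (P (x k))) <= F (x k) - Fs ->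
     F (x (S k)) - Fs <= (1 - (1 - eta) * gamma * alpha k / 2) * (F (x k) - Fs)) /\
  (forall k0 : nat, F (x k0) - Fs < M * R0 ^ 2 ->
     (forall j, (j < k0)%nat -> ~ (F (x j) - Fs < M * R0 ^ 2)) ->
     (forall k, (k0 <= k)%nat ->
        F (x k) - Fs <= 2 * M * R0 ^ 2 / (gamma * (1 - eta) * rsum alpha k0 (k - k0) + 2)) /\
     (forall abar, 0 < abar -> (forall k, abar <= alpha k) ->
        INR k0 <= Rmax 0 (1 + 2 / (gamma * (1 - eta) * abar)
                              * ln ((F (x O) - Fs) / (M * R0 ^ 2))))).

(* Convexity of f and psi makes the step lam (P x - x) toward a minimizer admissible in the
   subproblem, so its optimal value satisfies
     Q^* <= - lam (F(x) - F^* ) + lam^2 / 2 (x - P x)^T H (x - P x)   for lam in [0, 1].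
   The Armijo search and the acceptance test of Algorithm 2 both decrease F by at least
   gamma alpha_k (1 - eta) |Q^*|, giving a one-step recursion for the gap F(x_k) - F^*.
   Taking lam = 1 yields the linear rate while the gap dominates the quadratic term; taking
   lam = gap / (M R_0^2) once the gap is below M R_0^2 yields
   1 / gap_{k+1} >= 1 / gap_k + gamma (1 - eta) alpha_k / (2 M R_0^2), hence the O(1/k) rate,
   and the linear phase before k_0 bounds k_0 logarithmically.
   For Algorithm 2, the descent lemma and the inexactness condition show that a trial matrix
   H >= mu I with mu >= L (1 + sqrt eta) / (2 - gamma (1 - sqrt eta)) is always accepted, so
   every rejected trial had smaller curvature; this bounds the accepted H_k by M~. *)

From Stdlib Require Import Reals Lra Lia.
From Stdlib Require Import FunctionalExtensionality.
From Stdlib Require Vectors.Fin.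
Open Scope R_scope.

Lemma finsum_ext n (u v : Fin.t n -> R) : (forall i, u i = v i) -> finsum n u = finsum n v.
Proof. intro E. f_equal. apply functional_extensionality. exact E. Qed.

Lemma finsum_add n (u v : Fin.t n -> R) :
  finsum n (fun i => u i + v i) = finsum n u + finsum n v.
Proof.
  induction n as [|n IH]; simpl; [ring|].
  rewrite (IH (fun i => u (Fin.FS i)) (fun i => v (Fin.FS i))). ring.
Qed.

Lemma finsum_scale n a (u : Fin.t n -> R) :
  finsum n (fun i => a * u i) = a * finsum n u.
Proof. induction n as [|n IH]; simpl; [ring|]. rewrite (IH (fun i => u (Fin.FS i))). ring. Qed.

Lemma finsum_nonneg n (u : Fin.t n -> R) : (forall i, 0 <= u i) -> 0 <= finsum n u.
Proof.
  induction n as [|n IH]; simpl; intro Hu; [lra|].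
  pose proof (Hu Fin.F1). pose proof (IH (fun i => u (Fin.FS i)) (fun i => Hu _)). lra.
Qed.

Lemma finsum_zero n : finsum n (fun _ => 0) = 0.
Proof. induction n as [|n IH]; simpl; [|rewrite IH]; ring. Qed.

Lemma finsum_delta n (u : Fin.t n -> R) i :
  finsum n (fun j => (if Fin.eq_dec i j then 1 else 0) * u j) = u i.
Proof.
  induction n as [|n IH]; [inversion i|].
  pattern i. apply Fin.caseS'; simpl.
  - destruct (Fin.eq_dec Fin.F1 Fin.F1) as [_|C]; [|congruence].
    rewrite (finsum_ext _ _ (fun _ => 0)), finsum_zero; [ring|].
    intro j. destruct (Fin.eq_dec Fin.F1 (Fin.FS j)) as [E|_]; [inversion E|ring].
  - intro p. destruct (Fin.eq_dec (Fin.FS p) Fin.F1) as [E|_]; [inversion E|].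
    rewrite <- (IH (fun j => u (Fin.FS j)) p), Rmult_0_l, Rplus_0_l.
    apply finsum_ext. intro j.
    destruct (Fin.eq_dec (Fin.FS p) (Fin.FS j)) as [E|E], (Fin.eq_dec p j) as [E'|E'];
      try ring.
    + apply Fin.FS_inj in E. contradiction.
    + subst. contradiction.
Qed.

Ltac vext := apply functional_extensionality; intro; unfold vadd, vsub, vscale; ring.

Lemma dot_comm n (u v : vec n) : dot u v = dot v u.
Proof. apply finsum_ext. intro; ring. Qed.

Lemma dot_addl n (u v w : vec n) : dot (vadd u v) w = dot u w + dot v w.
Proof. unfold dot, vadd. rewrite <- finsum_add. apply finsum_ext. intro; ring. Qed.

Lemma dot_addr n (u v w : vec n) : dot w (vadd u v) = dot w u + dot w v.
Proof. rewrite !(dot_comm _ w). apply dot_addl. Qed.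

Lemma dot_scalel n a (u w : vec n) : dot (vscale a u) w = a * dot u w.
Proof. unfold dot, vscale. rewrite <- finsum_scale. apply finsum_ext. intro; ring. Qed.

Lemma dot_scaler n a (u w : vec n) : dot w (vscale a u) = a * dot w u.
Proof. rewrite !(dot_comm _ w). apply dot_scalel. Qed.

Lemma dot_subl n (u v w : vec n) : dot (vsub u v) w = dot u w - dot v w.
Proof.
  replace (vsub u v) with (vadd u (vscale (-1) v)) by vext.
  rewrite dot_addl, dot_scalel. ring.
Qed.

Lemma dot_self_nonneg n (u : vec n) : 0 <= dot u u.
Proof. apply finsum_nonneg. intro. apply Rle_0_sqr. Qed.

Lemma vnorm_nonneg n (u : vec n) : 0 <= vnorm u.
Proof. apply sqrt_pos. Qed.

Lemma vnorm_sqr n (u : vec n) : vnorm u ^ 2 = dot u u.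
Proof. unfold vnorm. rewrite <- Rsqr_pow2. apply Rsqr_sqrt, dot_self_nonneg. Qed.

Lemma vnorm_scale n a (u : vec n) : vnorm (vscale a u) = Rabs a * vnorm u.
Proof.
  unfold vnorm. rewrite dot_scalel, dot_scaler, <- Rmult_assoc.
  rewrite sqrt_mult by (apply Rle_0_sqr || apply dot_self_nonneg).
  f_equal. apply sqrt_Rsqr_abs.
Qed.

Lemma cauchy_schwarz n (u v : vec n) : dot u v <= vnorm u * vnorm v.
Proof.
  set (A := dot u u). set (B := dot v v). set (C := dot u v).
  assert (Hquad : forall t, 0 <= A + 2 * t * C + t ^ 2 * B).
  { intro t. pose proof (dot_self_nonneg _ (vadd u (vscale t v))) as Ht.
    rewrite dot_addl, !dot_addr, !dot_scalel, !dot_scaler, (dot_comm _ v u) in Ht.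
    unfold A, B, C. nra. }
  assert (HA : 0 <= A) by apply dot_self_nonneg.
  assert (HB : 0 <= B) by apply dot_self_nonneg.
  destruct (Rle_dec C 0) as [HC|HC].
  { pose proof (vnorm_nonneg _ u). pose proof (vnorm_nonneg _ v). nra. }
  assert (HB0 : 0 < B).
  { destruct (Req_dec B 0) as [E|E]; [|lra]. exfalso.
    specialize (Hquad (- (A + 1) / (2 * C))). rewrite E in Hquad.
    replace (A + 2 * (- (A + 1) / (2 * C)) * C + (- (A + 1) / (2 * C)) ^ 2 * 0) with (-1)
      in Hquad by (field; lra). lra. }
  assert (HCS : C * C <= A * B).
  { specialize (Hquad (- C / B)).
    replace (A + 2 * (- C / B) * C + (- C / B) ^ 2 * B) with ((A * B - C * C) / B)
      in Hquad by (field; lra).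
    apply Rmult_le_compat_r with (r := B) in Hquad; [|lra].
    unfold Rdiv in Hquad. rewrite Rmult_assoc, Rinv_l in Hquad; lra. }
  unfold vnorm. fold A B. rewrite <- sqrt_mult, <- (sqrt_square C) by lra.
  apply sqrt_le_1; nra.
Qed.

Lemma mv_scale n (H : mat n) a u : mv H (vscale a u) = vscale a (mv H u).
Proof.
  apply functional_extensionality; intro i. unfold mv, vscale.
  rewrite <- finsum_scale. apply finsum_ext. intro; ring.
Qed.

Lemma quad_scale n (H : mat n) a v : quad H (vscale a v) = a ^ 2 * quad H v.
Proof. unfold quad. rewrite mv_scale, dot_scalel, dot_scaler. ring. Qed.

Lemma quad_opp_sub n (H : mat n) u v : quad H (vsub v u) = quad H (vsub u v).
Proof. replace (vsub v u) with (vscale (-1) (vsub u v)) by vext. rewrite quad_scale. ring. Qed.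

Lemma quad_madd n (A B : mat n) v : quad (madd A B) v = quad A v + quad B v.
Proof.
  unfold quad. rewrite <- dot_addr. f_equal. apply functional_extensionality; intro i.
  unfold mv, madd, vadd. rewrite <- finsum_add. apply finsum_ext. intro; ring.
Qed.

Lemma quad_mscale n a (A : mat n) v : quad (mscale a A) v = a * quad A v.
Proof.
  unfold quad. rewrite <- dot_scaler. f_equal. apply functional_extensionality; intro i.
  unfold mv, mscale, vscale. rewrite <- finsum_scale. apply finsum_ext. intro; ring.
Qed.

Lemma quad_ident n v : quad (ident n) v = dot v v.
Proof.
  unfold quad. f_equal. apply functional_extensionality; intro i.
  apply finsum_delta.
Qed.

Lemma quad_le_of_spec_norm n (H : mat n) M v : spec_norm_le H M -> quad H v <= M * dot v v.
Proof.
  intro HM. eapply Rle_trans; [apply cauchy_schwarz|].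
  rewrite <- vnorm_sqr. specialize (HM v).
  pose proof (vnorm_nonneg _ v). pose proof (vnorm_nonneg _ (mv H v)). nra.
Qed.
Lemma line_derivative n (f : vec n -> R) g x d t :
  has_gradient f g ->
  derivable_pt_lim (fun s => f (vadd x (vscale s d))) t (dot (g (vadd x (vscale t d))) d).
Proof.
  intros Hg eps Heps. set (y := vadd x (vscale t d)). set (nd := vnorm d).
  assert (Hnd : 0 <= nd) by apply vnorm_nonneg.
  destruct (Hg y (eps / (2 * (nd + 1)))) as [delta [Hdelta Hy]].
  { apply Rdiv_lt_0_compat; lra. }
  assert (Hdp : 0 < delta / (nd + 1)) by (apply Rdiv_lt_0_compat; lra).
  exists (mkposreal _ Hdp). intros h Hh0 Hhd. simpl in Hhd.
  assert (Habs : 0 < Rabs h) by (apply Rabs_pos_lt; auto).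
  assert (Hsmall : Rabs h * nd < delta).
  { apply Rle_lt_trans with (Rabs h * (nd + 1)); [nra|].
    apply Rmult_lt_reg_r with (/ (nd + 1)); [apply Rinv_0_lt_compat; lra|].
    rewrite Rmult_assoc, Rinv_r by lra. lra. }
  specialize (Hy (vscale h d)). rewrite vnorm_scale, dot_scaler in Hy.
  specialize (Hy Hsmall).
  replace (vadd x (vscale (t + h) d)) with (vadd y (vscale h d)) by (unfold y; vext).
  replace ((f (vadd y (vscale h d)) - f y) / h - dot (g y) d)
    with ((f (vadd y (vscale h d)) - f y - h * dot (g y) d) / h) by (field; auto).
  unfold Rdiv at 1. rewrite Rabs_mult, Rabs_inv.
  apply Rle_lt_trans with (eps / (2 * (nd + 1)) * (Rabs h * nd) * / Rabs h).
  { apply Rmult_le_compat_r; [left; apply Rinv_0_lt_compat; auto|exact Hy]. }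
  replace (eps / (2 * (nd + 1)) * (Rabs h * nd) * / Rabs h) with (eps * nd / (2 * (nd + 1)))
    by (field; lra).
  apply Rmult_lt_reg_r with (2 * (nd + 1)); [lra|].
  unfold Rdiv. rewrite Rmult_assoc, Rinv_l by lra. nra.
Qed.

Lemma derivative_le_chord (phi : R -> R) l :
  derivable_pt_lim phi 0 l ->
  (forall t, 0 < t <= 1 -> phi t <= (1 - t) * phi 0 + t * phi 1) ->
  l <= phi 1 - phi 0.
Proof.
  intros Hd Hcvx. apply Rle_plus_epsilon. intros eps Heps.
  destruct (Hd eps Heps) as [delta Hdelta].
  set (t := Rmin 1 (delta / 2)).
  assert (Ht : 0 < t <= 1).
  { split; [apply Rmin_glb_lt; [lra|apply Rdiv_lt_0_compat; [apply cond_pos|lra]]|apply Rmin_l]. }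
  assert (Htd : Rabs t < delta).
  { rewrite Rabs_pos_eq by lra. pose proof (cond_pos delta).
    apply Rle_lt_trans with (delta / 2); [apply Rmin_r|lra]. }
  specialize (Hdelta t ltac:(lra) Htd). rewrite Rplus_0_l in Hdelta.
  apply Rabs_def2 in Hdelta.
  assert (Hslope : (phi t - phi 0) / t <= phi 1 - phi 0).
  { apply Rmult_le_reg_r with t; [lra|].
    unfold Rdiv. rewrite Rmult_assoc, Rinv_l by lra. specialize (Hcvx t Ht). lra. }
  lra.
Qed.

Lemma convex_gradient_ineq n (f : vec n -> R) g :
  has_gradient f g -> convex_fun f ->
  forall x y, dot (g x) (vsub y x) <= f y - f x.
Proof.
  intros Hg Hf x y.
  set (phi := fun s => f (vadd x (vscale s (vsub y x)))).
  assert (Hphi : forall s, phi s = f (vadd (vscale s y) (vscale (1 - s) x)))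
    by (intro s; unfold phi; f_equal; vext).
  pose proof (line_derivative _ f g x (vsub y x) 0 Hg) as Hd.
  replace (vadd x (vscale 0 (vsub y x))) with x in Hd by vext.
  replace (f y - f x) with (phi 1 - phi 0) by (rewrite !Hphi; f_equal; f_equal; vext).
  apply derivative_le_chord; [exact Hd|].
  intros t Ht. rewrite !Hphi.
  replace (vadd (vscale 1 y) (vscale (1 - 1) x)) with y by vext.
  replace (vadd (vscale 0 y) (vscale (1 - 0) x)) with x by vext.
  pose proof (Hf y x t ltac:(lra)). lra.
Qed.

Lemma descent_lemma n (f : vec n -> R) g L :
  has_gradient f g -> (forall x y, vnorm (vsub (g x) (g y)) <= L * vnorm (vsub x y)) ->
  forall x d, f (vadd x d) <= f x + dot (g x) d + L / 2 * dot d d.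
Proof.
  intros Hg HL x d. set (D := dot d d).
  set (phi := fun t => f (vadd x (vscale t d))).
  set (h := fun t => phi t - t * dot (g x) d - L / 2 * (t * t) * D).
  set (h' := fun t => dot (g (vadd x (vscale t d))) d - dot (g x) d - L / 2 * (2 * t) * D).
  assert (Hh : forall t, derivable_pt_lim h t (h' t)).
  { intro t.
    replace (h' t) with (dot (g (vadd x (vscale t d))) d - (1 * dot (g x) d + t * 0)
                         - (L / 2 * (1 * t + t * 1) * D + L / 2 * (t * t) * 0))
      by (unfold h'; ring).
    apply derivable_pt_lim_minus; [apply derivable_pt_lim_minus|].
    - apply line_derivative, Hg.
    - apply (derivable_pt_lim_mult id (fct_cte (dot (g x) d)));
        [apply derivable_pt_lim_id|apply derivable_pt_lim_const].
    - apply (derivable_pt_lim_mult (mult_real_fct (L / 2) (mult_fct id id)) (fct_cte D));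
        [apply derivable_pt_lim_scal, derivable_pt_lim_mult; apply derivable_pt_lim_id
        |apply derivable_pt_lim_const]. }
  set (pr := fun t => exist _ (h' t) (Hh t) : derivable_pt h t).
  destruct (MVT_cor1 h 0 1 pr Rlt_0_1) as [c [Hc Hc01]]. simpl in Hc. unfold h' in Hc.
  assert (Hgc : dot (g (vadd x (vscale c d))) d - dot (g x) d <= L * c * D).
  { rewrite <- dot_subl. eapply Rle_trans; [apply cauchy_schwarz|].
    eapply Rle_trans; [apply Rmult_le_compat_r; [apply vnorm_nonneg|apply HL]|].
    replace (vsub (vadd x (vscale c d)) x) with (vscale c d) by vext.
    rewrite vnorm_scale, Rabs_pos_eq by lra. unfold D. rewrite <- vnorm_sqr. right; ring. }
  unfold h, phi in Hc.
  replace (vadd x (vscale 1 d)) with (vadd x d) in Hc by vext.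
  replace (vadd x (vscale 0 d)) with x in Hc by vext.
  fold D. nra.
Qed.
Definition Qvalues {n} (dom : vec n -> Prop) g psi x (H : mat n) : R -> Prop :=
  fun r => exists e, dom (vadd x e) /\ r = Qv g psi x H e.

Section Subproblem.
Variables (n : nat) (dom : vec n -> Prop) (g : vec n -> vec n) (psi : vec n -> R).
Variables (x : vec n) (H : mat n) (Qs : R).
Hypothesis Hpsi : ext_convex dom psi.
Hypothesis HQs : is_glb (Qvalues dom g psi x H) Qs.
Hypothesis Hx : dom x.

Lemma Qstar_nonpos : Qs <= 0.
Proof.
  destruct HQs as [Hlb _]. replace 0 with (Qv g psi x H (vscale 0 x)).
  - apply Hlb. exists (vscale 0 x). split; [|reflexivity].
    replace (vadd x (vscale 0 x)) with x by vext. exact Hx.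
  - unfold Qv. rewrite dot_scaler, quad_scale.
    replace (vadd x (vscale 0 x)) with x by vext. ring.
Qed.

Lemma Qstar_le_segment d t : dom (vadd x d) -> 0 <= t <= 1 ->
  Qs <= t * (Qv g psi x H d - / 2 * quad H d) + t ^ 2 / 2 * quad H d.
Proof.
  destruct Hpsi as [Hdom Hcvx]. destruct HQs as [Hlb _]. intros Hxd Ht.
  assert (E : vadd (vscale t (vadd x d)) (vscale (1 - t) x) = vadd x (vscale t d)) by vext.
  assert (Hd : dom (vadd x (vscale t d))) by (rewrite <- E; apply Hdom; auto).
  apply Rle_trans with (Qv g psi x H (vscale t d)); [apply Hlb; exists (vscale t d); auto|].
  pose proof (Hcvx _ _ t Hxd Hx Ht) as Hp. rewrite E in Hp.
  unfold Qv. rewrite dot_scaler, quad_scale. nra.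
Qed.

(* The model is evaluated at the admissible step lam (y - x) toward the minimizer y. *)
Lemma Qstar_le_gap (f : vec n -> R) Fs y lam :
  has_gradient f g -> convex_fun f -> Omega dom f psi Fs y -> 0 <= lam <= 1 ->
  Qs <= - lam * (Fv f psi x - Fs) + lam ^ 2 / 2 * quad H (vsub x y).
Proof.
  destruct Hpsi as [Hdom Hcvx]. destruct HQs as [Hlb _]. intros Hg Hf [Hy HFy] Hlam.
  set (w := vsub y x).
  assert (E : vadd (vscale lam y) (vscale (1 - lam) x) = vadd x (vscale lam w))
    by (unfold w; vext).
  assert (Hd : dom (vadd x (vscale lam w))) by (rewrite <- E; apply Hdom; auto).
  apply Rle_trans with (Qv g psi x H (vscale lam w)); [apply Hlb; exists (vscale lam w); auto|].
  pose proof (Hcvx _ _ lam Hy Hx Hlam) as Hp. rewrite E in Hp.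
  pose proof (convex_gradient_ineq _ f g Hg Hf x y) as Hgi.
  unfold Qv. rewrite dot_scaler, quad_scale. unfold w. rewrite quad_opp_sub.
  unfold w, Fv in *. nra.
Qed.

End Subproblem.

Lemma sqrt_lt_one eta : 0 <= eta < 1 -> sqrt eta < 1.
Proof. intro Heta. rewrite <- sqrt_1. apply sqrt_lt_1; lra. Qed.

Lemma inexact_model_decrease n dom g psi x (H : mat n) eta d :
  ext_convex dom psi -> dom x -> 0 <= eta < 1 -> 0 <= quad H d ->
  inexact dom g psi x H eta d ->
  (1 - sqrt eta) * (/ 2 * quad H d) <= (1 + sqrt eta) * - Qv g psi x H d.
Proof.
  intros Hpsi Hx Heta Hd [Hxd [Qs [HQs HQ]]].
  set (s := sqrt eta). set (a := - Qv g psi x H d). set (p := / 2 * quad H d).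
  assert (Hs0 : 0 <= s) by apply sqrt_pos.
  assert (Hs1 : s < 1) by (apply sqrt_lt_one, Heta).
  assert (Hss : s * s = eta) by (apply sqrt_sqrt; lra).
  pose proof (Qstar_nonpos _ dom g psi x H Qs HQs Hx) as HQs0.
  assert (Ha : (1 - eta) * - Qs <= a) by (unfold a; lra).
  assert (Ha0 : 0 <= a) by nra.
  assert (Hp : 0 <= p) by (unfold p; lra).
  destruct (Rle_dec p a) as [Hpa|Hpa]; [nra|].
  set (t := (a + p) / (2 * p)).
  assert (Ht : 0 <= t <= 1).
  { unfold t. split.
    - apply Rmult_le_pos; [lra|left; apply Rinv_0_lt_compat; lra].
    - apply Rmult_le_reg_r with (2 * p); [lra|].
      unfold Rdiv. rewrite Rmult_assoc, Rinv_l by lra. lra. }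
  pose proof (Qstar_le_segment _ dom g psi x H Qs Hpsi HQs Hx d t Hxd Ht) as Hseg.
  replace (Qv g psi x H d) with (- a) in Hseg by (unfold a; ring).
  replace (quad H d) with (2 * p) in Hseg by (unfold p; field).
  replace (t * (- a - / 2 * (2 * p)) + t ^ 2 / 2 * (2 * p)) with (- ((a + p) ^ 2 / (4 * p)))
    in Hseg by (unfold t; field; lra).
  assert (Hsq : (a + p) ^ 2 <= 4 * p * - Qs).
  { apply Rmult_le_compat_r with (r := 4 * p) in Hseg; [|lra].
    unfold Rdiv in Hseg. rewrite Ropp_mult_distr_l, Rmult_assoc, Rinv_l in Hseg by lra. lra. }
  (* (1 - s^2) (a + p)^2 - 4 p a factors as ((1-s)p - (1+s)a) ((1+s)p - (1-s)a) *)
  assert (Hprod : ((1 - s) * p - (1 + s) * a) * ((1 + s) * p - (1 - s) * a) <= 0).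
  { assert ((1 - s * s) * (a + p) ^ 2 <= 4 * p * a) by (rewrite Hss; nra). nra. }
  assert (0 < (1 + s) * p - (1 - s) * a) by nra.
  nra.
Qed.

Definition accept_threshold (L gamma eta : R) : R :=
  L * (1 + sqrt eta) / (2 - gamma * (1 - sqrt eta)).

Lemma accept_threshold_denom_pos gamma eta : 0 < gamma <= 1 -> 0 <= eta < 1 ->
  0 < 2 - gamma * (1 - sqrt eta).
Proof. intros Hgamma Heta. pose proof (sqrt_pos eta). pose proof (sqrt_lt_one eta Heta). nra. Qed.

Lemma accept_threshold_pos L gamma eta : 0 < L -> 0 < gamma <= 1 -> 0 <= eta < 1 ->
  0 < accept_threshold L gamma eta.
Proof.
  intros HL Hgamma Heta. pose proof (sqrt_pos eta).
  apply Rdiv_lt_0_compat; [nra|apply accept_threshold_denom_pos; auto].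
Qed.

Lemma accept_of_curvature n dom (f : vec n -> R) g psi L gamma eta x H d mu :
  has_gradient f g -> (forall x y, vnorm (vsub (g x) (g y)) <= L * vnorm (vsub x y)) ->
  0 < L -> ext_convex dom psi -> 0 < gamma <= 1 -> 0 <= eta < 1 -> dom x ->
  (forall v, mu * dot v v <= quad H v) ->
  accept_threshold L gamma eta <= mu ->
  inexact dom g psi x H eta d -> accept f psi g gamma x H d.
Proof.
  intros Hg HL HL0 Hpsi Hgamma Heta Hx Hmu Hc Hd.
  set (s := sqrt eta). unfold accept_threshold in Hc. fold s in Hc.
  assert (Hs0 : 0 <= s) by apply sqrt_pos.
  assert (Hs1 : s < 1) by (apply sqrt_lt_one, Heta).
  assert (Hden : 0 < 2 - gamma * (1 - s)) by (apply accept_threshold_denom_pos; auto).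
  assert (Hc' : L * (1 + s) <= mu * (2 - gamma * (1 - s))).
  { apply Rmult_le_compat_r with (r := 2 - gamma * (1 - s)) in Hc; [|lra].
    unfold Rdiv in Hc. rewrite Rmult_assoc, Rinv_l in Hc by lra. lra. }
  assert (Hmu0 : 0 < mu) by nra.
  set (a := - Qv g psi x H d). set (p := / 2 * quad H d). set (D := dot d d).
  assert (HD : 0 <= D) by apply dot_self_nonneg.
  assert (HpD : mu * D <= 2 * p) by (unfold p, D; specialize (Hmu d); lra).
  assert (Hp : 0 <= p) by nra.
  pose proof (inexact_model_decrease _ dom g psi x H eta d Hpsi Hx Heta
                ltac:(unfold p in Hp; lra) Hd) as Hkey.
  fold s a p in Hkey.
  assert (Ha : 0 <= a) by nra.
  assert (Hdesc := descent_lemma _ f g L Hg HL x d). fold D in Hdesc.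
  assert (Hgain : 0 <= (1 + s) * (mu * (1 - gamma) * a + p * (mu - L))).
  { assert ((1 + s) * (mu * (1 - gamma) * a) >= mu * (1 - gamma) * ((1 - s) * p)).
    { assert (0 <= mu * (1 - gamma)) by nra. nra. }
    nra. }
  assert (Hmain : gamma * a <= a + p - L / 2 * D).
  { apply Rmult_le_reg_l with mu; [lra|].
    assert (0 <= mu * (1 - gamma) * a + p * (mu - L)) by nra.
    replace (mu * (a + p - L / 2 * D)) with (mu * a + mu * p - L / 2 * (mu * D)) by ring.
    nra. }
  unfold accept, Fv. unfold a, p, D, Qv in *. split; nra.
Qed.
Lemma rsum_nonneg a m len : (forall k, 0 <= a k) -> 0 <= rsum a m len.
Proof. intro Ha. induction len; simpl; [lra|]. specialize (Ha (m + len)%nat). lra. Qed.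

(* One step of the O(1/k) recursion: the map x |-> x - c x^2 / (2B) is nondecreasing on
   [0, B/c], so it may be evaluated at the previous bound 2B/u. *)
Lemma inverse_rate_step B c u x x' :
  0 < B -> 0 <= c <= 1 -> 2 <= u -> 0 <= x -> x <= 2 * B / u ->
  x' <= x - c * x ^ 2 / (2 * B) -> x' <= 2 * B / (u + c).
Proof.
  intros HB Hc Hu Hx HxD Hx'.
  set (D := 2 * B / u) in *.
  assert (HD : D * u = 2 * B) by (unfold D; field; lra).
  assert (HD0 : 0 < D) by (unfold D; apply Rdiv_lt_0_compat; lra).
  assert (HDB : D <= B) by nra.
  assert (Hmono : x - c * x ^ 2 / (2 * B) <= D - c * D ^ 2 / (2 * B)).
  { assert (E : D - c * D ^ 2 / (2 * B) - (x - c * x ^ 2 / (2 * B))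
               = (D - x) * (2 * B - c * (D + x)) / (2 * B)) by (field; lra).
    assert (c * (D + x) <= 2 * B) by (assert (D + x <= 2 * B) by lra; nra).
    assert (0 <= (D - x) * (2 * B - c * (D + x)) / (2 * B)).
    { apply Rmult_le_pos; [nra|left; apply Rinv_0_lt_compat; lra]. }
    lra. }
  assert (Hval : D - c * D ^ 2 / (2 * B) <= 2 * B / (u + c)).
  { replace (D - c * D ^ 2 / (2 * B)) with (2 * B * (u - c) / (u * u)) by (unfold D; field; lra).
    apply Rmult_le_reg_r with (u * u * (u + c)); [nra|].
    replace (2 * B * (u - c) / (u * u) * (u * u * (u + c))) with (2 * B * (u - c) * (u + c))
      by (field; lra).
    replace (2 * B / (u + c) * (u * u * (u + c))) with (2 * B * (u * u)) by (field; lra).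
    nra. }
  lra.
Qed.

Section GapRecursion.
Variables (e q alpha : nat -> R) (Fs B gamma eta : R).
Hypothesis Hgamma : 0 < gamma <= 1.
Hypothesis Heta : 0 <= eta < 1.
Hypothesis Halpha : forall k, 0 < alpha k <= 1.
Hypothesis HB : 0 < B.
Hypothesis Hlow : forall k, Fs <= e k.
Hypothesis Hq : forall k, e k <= e O -> q k <= B.
Hypothesis Hrec : forall k lam, 0 <= lam <= 1 ->
  e (S k) - Fs <= (e k - Fs) + gamma * alpha k * (1 - eta) * (- lam * (e k - Fs) + lam ^ 2 / 2 * q k).

Lemma gap_recursion_coef_nonneg k : 0 <= gamma * alpha k * (1 - eta).
Proof. pose proof (Halpha k). apply Rmult_le_pos; [apply Rmult_le_pos|]; lra. Qed.

Lemma recursion_le_initial k : e k <= e O.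
Proof.
  induction k as [|k IH]; [lra|].
  pose proof (Hrec k 0 ltac:(lra)). lra.
Qed.

Lemma recursion_linear_rate k : q k <= e k - Fs ->
  e (S k) - Fs <= (1 - (1 - eta) * gamma * alpha k / 2) * (e k - Fs).
Proof.
  intro Hk. pose proof (Hrec k 1 ltac:(lra)).
  pose proof (gap_recursion_coef_nonneg k).
  assert (gamma * alpha k * (1 - eta) * (- 1 * (e k - Fs) + 1 ^ 2 / 2 * q k)
          <= gamma * alpha k * (1 - eta) * (- (e k - Fs) / 2)) by (apply Rmult_le_compat_l; lra).
  lra.
Qed.

Lemma recursion_sublinear_step k : e k - Fs <= B ->
  e (S k) - Fs <= (e k - Fs) - gamma * (1 - eta) * alpha k * (e k - Fs) ^ 2 / (2 * B).
Proof.
  intro Hk. set (dl := e k - Fs) in *.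
  assert (Hdl : 0 <= dl) by (unfold dl; pose proof (Hlow k); lra).
  assert (Hlam : 0 <= dl / B <= 1).
  { split; [apply Rmult_le_pos; [lra|left; apply Rinv_0_lt_compat; lra]|].
    apply Rmult_le_reg_r with B; [lra|]. unfold Rdiv. rewrite Rmult_assoc, Rinv_l by lra. lra. }
  pose proof (Hrec k (dl / B) Hlam) as Hstep. fold dl in Hstep.
  pose proof (Hq k (recursion_le_initial k)) as HqB.
  assert (Hin : - (dl / B) * dl + (dl / B) ^ 2 / 2 * q k <= - dl ^ 2 / (2 * B)).
  { assert ((dl / B) ^ 2 / 2 * q k <= (dl / B) ^ 2 / 2 * B).
    { apply Rmult_le_compat_l; [|exact HqB]. pose proof (pow2_ge_0 (dl / B)). lra. }
    replace (- dl ^ 2 / (2 * B)) with (- (dl / B) * dl + (dl / B) ^ 2 / 2 * B) by (field; lra).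
    lra. }
  assert (gamma * alpha k * (1 - eta) * (- (dl / B) * dl + (dl / B) ^ 2 / 2 * q k)
          <= gamma * alpha k * (1 - eta) * (- dl ^ 2 / (2 * B)))
    by (apply Rmult_le_compat_l; [apply gap_recursion_coef_nonneg|exact Hin]).
  replace (dl - gamma * (1 - eta) * alpha k * dl ^ 2 / (2 * B))
    with (dl + gamma * alpha k * (1 - eta) * (- dl ^ 2 / (2 * B))) by (field; lra).
  lra.
Qed.

Lemma recursion_sublinear_rate k0 : e k0 - Fs <= B -> forall j,
  e (k0 + j)%nat - Fs <= 2 * B / (gamma * (1 - eta) * rsum alpha k0 j + 2).
Proof.
  intros Hk0 j. induction j as [|j IH].
  - rewrite Nat.add_0_r. simpl. replace (2 * B / (gamma * (1 - eta) * 0 + 2)) with B by field.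
    exact Hk0.
  - rewrite Nat.add_succ_r. simpl rsum.
    set (k := (k0 + j)%nat) in *.
    set (u := gamma * (1 - eta) * rsum alpha k0 j + 2) in *.
    set (c := gamma * (1 - eta) * alpha k).
    assert (Hsum : 0 <= rsum alpha k0 j) by (apply rsum_nonneg; intro i; pose proof (Halpha i); lra).
    assert (Hu : 2 <= u) by (unfold u; assert (0 <= gamma * (1 - eta)) by nra; nra).
    assert (Hc : 0 <= c <= 1).
    { unfold c. pose proof (Halpha k). assert (0 <= gamma * (1 - eta) <= 1) by nra. nra. }
    replace (gamma * (1 - eta) * (rsum alpha k0 j + alpha k) + 2) with (u + c) by (unfold u, c; ring).
    assert (Hdl : 0 <= e k - Fs) by (pose proof (Hlow k); lra).
    assert (HdB : e k - Fs <= B).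
    { apply Rle_trans with (2 * B / u); [exact IH|].
      apply Rmult_le_reg_r with u; [lra|]. unfold Rdiv. rewrite Rmult_assoc, Rinv_l by lra. nra. }
    apply (inverse_rate_step B c u (e k - Fs)); auto.
    unfold c. apply recursion_sublinear_step, HdB.
Qed.

Lemma recursion_linear_phase abar : 0 < abar -> (forall k, abar <= alpha k) ->
  forall j, (forall i, (i < j)%nat -> B <= e i - Fs) ->
  e j - Fs <= exp (- ((1 - eta) * gamma * abar / 2) * INR j) * (e O - Fs).
Proof.
  intros Hab Hal. set (rho := (1 - eta) * gamma * abar / 2).
  assert (Hrho : rho <= 1) by (unfold rho; pose proof (Hal O); pose proof (Halpha O);
    assert (0 <= (1 - eta) * gamma <= 1) by nra; nra).
  induction j as [|j IH]; intro Hbig.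
  - simpl. rewrite Rmult_0_r, exp_0. lra.
  - specialize (IH (fun i Hi => Hbig i (Nat.lt_lt_succ_r _ _ Hi))).
    specialize (Hbig j (Nat.lt_succ_diag_r j)).
    pose proof (recursion_linear_rate j ltac:(pose proof (Hq j (recursion_le_initial j)); lra)) as Hj.
    assert (Hcontr : 1 - (1 - eta) * gamma * alpha j / 2 <= 1 - rho).
    { unfold rho. pose proof (Hal j). assert (0 <= (1 - eta) * gamma) by nra. nra. }
    assert (Hexp : 1 - rho <= exp (- rho)) by (pose proof (exp_ineq1_le (- rho)); lra).
    rewrite S_INR, Rmult_plus_distr_l, Rmult_1_r, exp_plus, (Rmult_comm (exp _)), Rmult_assoc.
    apply Rle_trans with ((1 - rho) * (e j - Fs)).
    { eapply Rle_trans; [exact Hj|]. apply Rmult_le_compat_r; [pose proof (Hlow j)|]; lra. }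
    apply Rmult_le_compat; [lra|pose proof (Hlow j); lra|exact Hexp|exact IH].
Qed.

Lemma recursion_entry_time k0 abar : 0 < abar -> (forall k, abar <= alpha k) ->
  (forall j, (j < k0)%nat -> B <= e j - Fs) ->
  INR k0 <= Rmax 0 (1 + 2 / (gamma * (1 - eta) * abar) * ln ((e O - Fs) / B)).
Proof.
  intros Hab Hal Hbig. destruct k0 as [|m]; [apply Rmax_l|].
  eapply Rle_trans; [|apply Rmax_r].
  set (rho := (1 - eta) * gamma * abar / 2).
  assert (Hrho : 0 < rho) by
    (unfold rho; apply Rdiv_lt_0_compat; [apply Rmult_lt_0_compat; [apply Rmult_lt_0_compat|]|]; lra).
  pose proof (recursion_linear_phase abar Hab Hal m (fun i Hi => Hbig i (Nat.lt_lt_succ_r _ _ Hi)))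
    as Hdecay.
  fold rho in Hdecay.
  specialize (Hbig m (Nat.lt_succ_diag_r m)).
  set (d0 := e O - Fs) in *.
  pose proof (exp_pos (- rho * INR m)) as Hexp0.
  assert (Hd0 : 0 < d0) by nra.
  assert (Hratio : exp (rho * INR m) <= d0 / B).
  { apply Rmult_le_reg_r with (B * exp (- rho * INR m)); [nra|].
    replace (exp (rho * INR m) * (B * exp (- rho * INR m))) with B
      by (rewrite Rmult_comm, Rmult_assoc, <- exp_plus; replace (- rho * INR m + rho * INR m) with 0 by ring;
          rewrite exp_0; ring).
    replace (d0 / B * (B * exp (- rho * INR m))) with (exp (- rho * INR m) * d0) by (field; lra).
    lra. }
  assert (Hln : rho * INR m <= ln (d0 / B)).
  { destruct (Rle_lt_dec (rho * INR m) (ln (d0 / B))) as [|Hlt]; [assumption|].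
    apply exp_increasing in Hlt. rewrite exp_ln in Hlt; [lra|].
    apply Rdiv_lt_0_compat; lra. }
  replace (2 / (gamma * (1 - eta) * abar)) with (/ rho) by (unfold rho; field; repeat split; lra).
  rewrite S_INR.
  assert (INR m <= / rho * ln (d0 / B)).
  { apply Rmult_le_reg_l with rho; [lra|]. rewrite <- Rmult_assoc, Rinv_r by lra. lra. }
  lra.
Qed.

End GapRecursion.
Lemma conclusions_of_gap_recursion n (f psi : vec n -> R) P Fs R0 M gamma eta
    (x : nat -> vec n) (H : nat -> mat n) alpha :
  0 < gamma <= 1 -> 0 <= eta < 1 -> (forall k, 0 < alpha k <= 1) -> 0 < M -> 0 < R0 ->
  (forall k, Fs <= Fv f psi (x k)) ->
  (forall k, Fv f psi (x k) <= Fv f psi (x O) -> quad (H k) (vsub (x k) (P (x k))) <= M * R0 ^ 2) ->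
  (forall k lam, 0 <= lam <= 1 ->
     Fv f psi (x (S k)) - Fs <= (Fv f psi (x k) - Fs) + gamma * alpha k * (1 - eta)
       * (- lam * (Fv f psi (x k) - Fs) + lam ^ 2 / 2 * quad (H k) (vsub (x k) (P (x k))))) ->
  conclusions f psi P Fs R0 M gamma eta x H alpha.
Proof.
  intros Hgamma Heta Halpha HM HR0 Hlow Hq Hrec.
  assert (HB : 0 < M * R0 ^ 2) by (apply Rmult_lt_0_compat; [|apply pow_lt]; lra).
  unfold conclusions; cbv zeta. split.
  { intros k. exact (recursion_linear_rate _ _ _ _ _ _ Hgamma Heta Halpha Hrec k). }
  intros k0 Hk0 Hfirst. split.
  - intros k Hk. replace k with (k0 + (k - k0))%nat at 1 by lia.
    replace (2 * M * R0 ^ 2) with (2 * (M * R0 ^ 2)) by ring.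
    apply (recursion_sublinear_rate _ _ _ _ _ _ _ Hgamma Heta Halpha HB Hlow Hq Hrec); lra.
  - intros abar Hab Hal.
    apply (recursion_entry_time _ _ _ _ _ _ _ Hgamma Heta Halpha HB Hlow Hq Hrec); auto.
    intros j Hj. apply Rnot_lt_le, Hfirst, Hj.
Qed.

Lemma quad_dist_le_of_sublevel n dom (f psi : vec n -> R) P x0 H R0 Mq y :
  is_lub (fun r => exists y, dom y /\ Fv f psi y <= Fv f psi x0 /\ r = vnorm (vsub y (P y))) R0 ->
  0 <= Mq -> (forall v, quad H v <= Mq * dot v v) ->
  dom y -> Fv f psi y <= Fv f psi x0 -> quad H (vsub y (P y)) <= Mq * R0 ^ 2.
Proof.
  intros [Hub _] HMq HH Hy HFy.
  assert (Hdist : vnorm (vsub y (P y)) <= R0) by (apply Hub; exists y; auto).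
  eapply Rle_trans; [apply HH|]. apply Rmult_le_compat_l; [exact HMq|].
  rewrite <- vnorm_sqr. pose proof (vnorm_nonneg _ (vsub y (P y))). nra.
Qed.

Lemma gap_recursion_of_decrease n dom (f : vec n -> R) g psi Fs P x H Qs x' c eta :
  has_gradient f g -> convex_fun f -> ext_convex dom psi ->
  is_projection (Omega dom f psi Fs) P -> is_glb (Qvalues dom g psi x H) Qs -> dom x ->
  0 <= c -> eta < 1 -> Fv f psi x' <= Fv f psi x + c * ((1 - eta) * Qs) ->
  forall lam, 0 <= lam <= 1 ->
    Fv f psi x' - Fs <= (Fv f psi x - Fs) + c * (1 - eta)
      * (- lam * (Fv f psi x - Fs) + lam ^ 2 / 2 * quad H (vsub x (P x))).
Proof.
  intros Hg Hf Hpsi HP HQs Hx Hc Heta Hdec lam Hlam.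
  pose proof (Qstar_le_gap _ dom g psi x H Qs Hpsi HQs Hx f Fs (P x) lam Hg Hf
                (proj1 (HP x)) Hlam) as Hgap.
  assert (c * (1 - eta) * Qs <= c * (1 - eta)
            * (- lam * (Fv f psi x - Fs) + lam ^ 2 / 2 * quad H (vsub x (P x)))).
  { apply Rmult_le_compat_l; [apply Rmult_le_pos|]; lra. }
  lra.
Qed.

Lemma pow_le_one b i : 0 <= b <= 1 -> b ^ i <= 1.
Proof.
  intro Hb. induction i as [|i IH]; simpl; [lra|].
  pose proof (pow_le b i (proj1 Hb)). nra.
Qed.

Lemma alg1_conclusions n (f : vec n -> R) g L dom psi Fs P beta gamma eta R0 M x H d alpha :
  assumption1 f g L dom psi Fs -> convex_fun f -> is_projection (Omega dom f psi Fs) P ->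
  alg1_run dom f psi g beta gamma eta x H d alpha ->
  assumption2 dom f psi P (x O) H R0 M -> (forall k, psd (H k)) ->
  conclusions f psi P Fs R0 M gamma eta x H alpha.
Proof.
  intros [_ [Hg [_ [Hpsi [_ [_ [_ [HFs _]]]]]]]] Hf HP
    [Hbeta [Hgamma [Heta [Hx0 Hrun]]]] [HR0 [HM [Hlub HHM]]] Hpsd.
  assert (Hdom : forall k, dom (x k)).
  { induction k as [|k IH]; [exact Hx0|].
    destruct (Hrun k) as [_ [_ [_ [[i [Hai [[Hxd _] _]]] Hxs]]]].
    rewrite Hxs, Hai. exact Hxd. }
  assert (Halpha : forall k, 0 < alpha k <= 1).
  { intro k. destruct (Hrun k) as [_ [_ [_ [[i [Hai _]] _]]]]. rewrite Hai.
    split; [apply pow_lt|apply pow_le_one]; lra. }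
  apply conclusions_of_gap_recursion; auto; try lra.
  - intro k. apply (proj1 HFs). exists (x k). auto.
  - intros k Hk. apply (quad_dist_le_of_sublevel _ dom f psi P (x O) (H k) R0 M); auto; [lra|].
    intro v. apply quad_le_of_spec_norm, HHM.
  - intros k lam Hlam.
    destruct (Hrun k) as [_ [_ [[_ [Qs [HQs HQ]]] [[i [Hai [[_ Harmijo] _]]] Hxs]]]].
    rewrite <- Hai in Harmijo. rewrite Hxs.
    specialize (Halpha k).
    apply (gap_recursion_of_decrease _ dom f g psi Fs P (x k) (H k) Qs); auto;
      [apply Rmult_le_pos; lra|lra|].
    (* the Armijo decrease Delta is below the model value Q(d) since H is psd *)
    pose proof (Hpsd k (d k)) as Hq.
    assert (alpha k * gamma * (dot (g (x k)) (d k) + psi (vadd (x k) (d k)) - psi (x k))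
            <= alpha k * gamma * ((1 - eta) * Qs)).
    { apply Rmult_le_compat_l; [apply Rmult_le_pos; lra|]. unfold Qv in HQ. lra. }
    lra.
Qed.
Lemma alg2_run_dom n trial variant1 dom (f psi : vec n -> R) g beta gamma eta x H0 H d :
  alg2_run trial variant1 dom f psi g beta gamma eta x H0 H d -> forall k, dom (x k).
Proof.
  intros [_ [_ [_ [Hx0 Hrun]]]] k. induction k as [|k IH]; [exact Hx0|].
  destruct (Hrun k) as [_ [_ [ik [dt [Hinex [_ [_ [_ [Hdk Hxs]]]]]]]]].
  rewrite Hxs, Hdk. exact (proj1 (Hinex ik (le_n ik))).
Qed.

Lemma alg2_conclusions n (f : vec n -> R) g L dom psi Fs P trial variant1
    beta gamma eta R0 M Mq x H0 H d :
  assumption1 f g L dom psi Fs -> convex_fun f -> is_projection (Omega dom f psi Fs) P ->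
  alg2_run trial variant1 dom f psi g beta gamma eta x H0 H d ->
  assumption2 dom f psi P (x O) H R0 M -> 0 < Mq ->
  (forall k v, quad (H k) v <= Mq * dot v v) ->
  conclusions f psi P Fs R0 Mq gamma eta x H (fun _ => 1).
Proof.
  intros [_ [Hg [_ [Hpsi [_ [_ [_ [HFs _]]]]]]]] Hf HP Hrun2 [HR0 [_ [Hlub _]]] HMq HHMq.
  pose proof (alg2_run_dom _ _ _ _ _ _ _ _ _ _ _ _ _ _ Hrun2) as Hdom.
  destruct Hrun2 as [_ [Hgamma [Heta [_ Hrun]]]].
  apply conclusions_of_gap_recursion; auto; try lra.
  - intro k. lra.
  - intro k. apply (proj1 HFs). exists (x k). auto.
  - intros k Hk. apply (quad_dist_le_of_sublevel _ dom f psi P (x O) (H k) R0 Mq); auto; lra.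
  - intros k lam Hlam.
    destruct (Hrun k) as [_ [_ [ik [dt [Hinex [_ [[Hacc _] [HHk [Hdk Hxs]]]]]]]]].
    destruct (Hinex ik (le_n ik)) as [_ [Qs [HQs HQ]]].
    rewrite <- HHk in HQs, HQ, Hacc. rewrite <- Hdk in HQ, Hacc. rewrite Hxs.
    apply (gap_recursion_of_decrease _ dom f g psi Fs P (x k) (H k) Qs); auto; try lra.
    assert (gamma * Qv g psi (x k) (H k) (d k) <= gamma * ((1 - eta) * Qs))
      by (apply Rmult_le_compat_l; lra).
    lra.
Qed.

Lemma curvature_lt_of_rejected n dom (f : vec n -> R) g psi L gamma eta x H d mu :
  has_gradient f g -> (forall x y, vnorm (vsub (g x) (g y)) <= L * vnorm (vsub x y)) ->
  0 < L -> ext_convex dom psi -> 0 < gamma <= 1 -> 0 <= eta < 1 -> dom x ->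
  (forall v, mu * dot v v <= quad H v) ->
  inexact dom g psi x H eta d -> ~ accept f psi g gamma x H d ->
  mu < accept_threshold L gamma eta.
Proof.
  intros Hg HL HL0 Hpsi Hgamma Heta Hx Hmu Hd Hrej.
  destruct (Rlt_le_dec mu (accept_threshold L gamma eta)) as [|Hge]; [assumption|].
  exfalso. apply Hrej. eapply accept_of_curvature; eauto.
Qed.

Section Algorithm2Curvature.
Variables (n : nat) (f : vec n -> R) (g : vec n -> vec n) (L : R).
Variables (dom : vec n -> Prop) (psi : vec n -> R).
Variables (beta gamma eta m0 M0 : R) (x : nat -> vec n) (H0 H : nat -> mat n) (d : nat -> vec n).
Hypothesis Hg : has_gradient f g.
Hypothesis HLip : forall x y, vnorm (vsub (g x) (g y)) <= L * vnorm (vsub x y).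
Hypothesis HL : 0 < L.
Hypothesis Hpsi : ext_convex dom psi.
Hypothesis HH0 : forall k, loewner_between m0 M0 (H0 k).

(* The last rejected trial had curvature m0 / beta^(ik-1) below the acceptance threshold,
   so the final factor 1 / beta^ik is at most threshold / (beta m0). *)
Lemma alg2_v1_quad_le : 0 < m0 ->
  alg2_run trialH_v1 true dom f psi g beta gamma eta x H0 H d ->
  forall k v, quad (H k) v <= Mtilde1 M0 m0 L beta gamma eta * dot v v.
Proof.
  intros Hm0 Hrun2 k v.
  pose proof (alg2_run_dom _ _ _ _ _ _ _ _ _ _ _ _ _ _ Hrun2 k) as Hxk.
  destruct Hrun2 as [Hbeta [Hgamma [Heta [_ Hrun]]]].
  destruct (Hrun k) as [_ [_ [ik [dt [Hinex [Hrej [_ [HHk _]]]]]]]].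
  pose proof (accept_threshold_pos L gamma eta HL Hgamma Heta) as Hc.
  set (c := accept_threshold L gamma eta) in *.
  assert (HMt : M0 * Rmax 1 (c / (beta * m0)) = Mtilde1 M0 m0 L beta gamma eta).
  { pose proof (accept_threshold_denom_pos gamma eta Hgamma Heta).
    unfold Mtilde1, c, accept_threshold. do 2 f_equal. field. repeat split; lra. }
  rewrite <- HMt, HHk. unfold trialH_v1. rewrite quad_mscale.
  destruct (HH0 k v) as [Hlo Hhi]. pose proof (dot_self_nonneg _ v) as Hv.
  assert (Hstep : / beta ^ ik <= Rmax 1 (c / (beta * m0))).
  { destruct ik as [|j]; [simpl; rewrite Rinv_1; apply Rmax_l|].
    eapply Rle_trans; [|apply Rmax_r].
    assert (Hbj : 0 < beta ^ j) by (apply pow_lt; lra).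
    assert (Hrejj : / beta ^ j * m0 < c).
    { apply (curvature_lt_of_rejected _ dom f g psi L gamma eta (x k)
               (trialH_v1 beta (H0 k) j) (dt j)); auto; try lra.
      - intro w. unfold trialH_v1. rewrite quad_mscale. destruct (HH0 k w) as [Hw _].
        pose proof (Rinv_0_lt_compat _ Hbj). nra. }
    simpl. rewrite Rinv_mult.
    apply Rmult_le_reg_r with (beta * m0); [nra|].
    replace (c / (beta * m0) * (beta * m0)) with c by (field; lra).
    replace (/ beta * / beta ^ j * (beta * m0)) with (/ beta ^ j * m0) by (field; lra). lra. }
  assert (Hpos : 0 <= / beta ^ ik) by (left; apply Rinv_0_lt_compat, pow_lt; lra).
  apply Rle_trans with (/ beta ^ ik * (M0 * dot v v)); [apply Rmult_le_compat_l; lra|].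
  assert (0 <= M0 * dot v v) by nra. nra.
Qed.

Lemma alg2_v2_quad_le :
  alg2_run trialH_v2 false dom f psi g beta gamma eta x H0 H d ->
  forall k v, quad (H k) v <= Mtilde2 M0 m0 L beta gamma eta * dot v v.
Proof.
  intros Hrun2 k v.
  pose proof (alg2_run_dom _ _ _ _ _ _ _ _ _ _ _ _ _ _ Hrun2 k) as Hxk.
  destruct Hrun2 as [Hbeta [Hgamma [Heta [_ Hrun]]]].
  destruct (Hrun k) as [_ [_ [ik [dt [Hinex [Hrej [_ [HHk _]]]]]]]].
  set (X := / beta * (accept_threshold L gamma eta - m0)).
  change (Mtilde2 M0 m0 L beta gamma eta) with (M0 + Rmax 1 X).
  pose proof (Rmax_l 1 X) as HX1.
  destruct (HH0 k v) as [Hlo Hhi]. pose proof (dot_self_nonneg _ v) as Hv.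
  rewrite HHk. destruct ik as [|j]; [simpl; nra|].
  change (trialH_v2 beta (H0 k) (S j)) with (madd (H0 k) (mscale (/ beta ^ j) (ident n))).
  rewrite quad_madd, quad_mscale, quad_ident.
  assert (Hstep : / beta ^ j <= Rmax 1 X).
  { destruct j as [|j]; [simpl; rewrite Rinv_1; lra|].
    eapply Rle_trans; [|apply Rmax_r].
    assert (Hrejj : m0 + / beta ^ j < accept_threshold L gamma eta).
    { apply (curvature_lt_of_rejected _ dom f g psi L gamma eta (x k)
               (trialH_v2 beta (H0 k) (S j)) (dt (S j))); auto; try lra.
      - intro w.
        change (trialH_v2 beta (H0 k) (S j)) with (madd (H0 k) (mscale (/ beta ^ j) (ident n))).
        rewrite quad_madd, quad_mscale, quad_ident. destruct (HH0 k w) as [Hw _]. lra. }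
    unfold X. simpl. rewrite Rinv_mult.
    apply Rmult_le_compat_l; [left; apply Rinv_0_lt_compat|]; lra. }
  nra.
Qed.

End Algorithm2Curvature.

Theorem theorem1 (n : nat) (f : vec n -> R) (g : vec n -> vec n) (L : R)
    (dom : vec n -> Prop) (psi : vec n -> R) (Fs : R) (P : vec n -> vec n) :
  assumption1 f g L dom psi Fs ->
  convex_fun f ->
  is_projection (Omega dom f psi Fs) P ->
  (* Algorithm 1 *)
  (forall (beta gamma eta R0 M : R) (x : nat -> vec n) (H : nat -> mat n)
          (d : nat -> vec n) (alpha : nat -> R),
     alg1_run dom f psi g beta gamma eta x H d alpha ->
     assumption2 dom f psi P (x O) H R0 M ->
     (forall k, psd (H k)) ->
     conclusions f psi P Fs R0 M gamma eta x H alpha) /\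
  (* Algorithm 2, Variant 1 *)
  (forall (beta gamma eta R0 M m0 M0 : R) (x : nat -> vec n) (H0 H : nat -> mat n)
          (d : nat -> vec n),
     alg2_run trialH_v1 true dom f psi g beta gamma eta x H0 H d ->
     0 < M0 -> 0 < m0 -> m0 <= M0 -> (forall k, loewner_between m0 M0 (H0 k)) ->
     assumption2 dom f psi P (x O) H R0 M ->
     (forall k, psd (H k)) ->
     conclusions f psi P Fs R0 (Mtilde1 M0 m0 L beta gamma eta) gamma eta x H (fun _ => 1)) /\
  (* Algorithm 2, Variant 2 *)
  (forall (beta gamma eta R0 M m0 M0 : R) (x : nat -> vec n) (H0 H : nat -> mat n)
          (d : nat -> vec n),
     alg2_run trialH_v2 false dom f psi g beta gamma eta x H0 H d ->
     0 < M0 -> m0 <= M0 -> (forall k, loewner_between m0 M0 (H0 k)) ->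
     assumption2 dom f psi P (x O) H R0 M ->
     (forall k, psd (H k)) ->
     conclusions f psi P Fs R0 (Mtilde2 M0 m0 L beta gamma eta) gamma eta x H (fun _ => 1)).
Proof.
  intros HA1 Hf HP.
  pose proof HA1 as [HL [Hg [HLip [Hpsi _]]]].
  split; [|split].
  - intros. eapply alg1_conclusions; eauto.
  - intros beta gamma eta R0 M m0 M0 x H0 H d Hrun HM0 Hm0 _ HH0 HA2 _.
    apply (alg2_conclusions _ f g L dom psi Fs P trialH_v1 true beta gamma eta R0 M _ x H0 H d); auto.
    + unfold Mtilde1. pose proof (Rmax_l 1 (L * (1 + sqrt eta)
        / (beta * (2 - gamma * (1 - sqrt eta)) * m0))). nra.
    + exact (alg2_v1_quad_le _ f g L dom psi beta gamma eta m0 M0 x H0 H d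
               Hg HLip HL Hpsi HH0 Hm0 Hrun).
  - intros beta gamma eta R0 M m0 M0 x H0 H d Hrun HM0 _ HH0 HA2 _.
    apply (alg2_conclusions _ f g L dom psi Fs P trialH_v2 false beta gamma eta R0 M _ x H0 H d); auto.
    + unfold Mtilde2. pose proof (Rmax_l 1 (/ beta * (L * (1 + sqrt eta)
        / (2 - gamma * (1 - sqrt eta)) - m0))). lra.
    + exact (alg2_v2_quad_le _ f g L dom psi beta gamma eta m0 M0 x H0 H d
               Hg HLip HL Hpsi HH0 Hrun).
Qed.
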